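(* Let $F\subsetneq K$ be fields of characteristic $0$, with $F$ a proper nonempty subfield of $K$. Let $p(x)=\sum_{k=0}^{n}a_k x^k\in K[x]$ be non-constant with $0\neq a_n\in F$. Let $q\in K[x,y]\setminus F[x,y]$, written $q(x,y)=\sum_{j=0}^{m}q_j(x,y)$ with each $q_j$ homogeneous of degree $j$ and $0\neq q_m\in F[x,y]$. If $q_j\notin F[x,y]$ for some $j\geq 1$, then $p(q(x,y))\notin F[x,y]$ and $D_F(p\circ q)=D_F(q)$.
   Context: $F[x,y]$ denotes polynomials in $x,y$ with all coefficients in $F$. For $h\in K[x,y]$ written $h=\sum_{k=0}^{N}h_k$ with $h_k$ homogeneous of degree $k$ and $h_N\neq 0$: if $h\notin F[x,y]$, $D_F(h)=N-\max\{k: h_k\notin F[x,y]\}$; if $h\in F[x,y]$, $D_F(h)=N$. *)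

From HB Require Import structures.
From mathcomp Require Import all_boot all_order all_algebra.
From mathcomp.multinomials Require Import mpoly.
Set Implicit Arguments. Unset Strict Implicit. Unset Printing Implicit Defensive.
Import Order.TTheory GRing.Theory.
Local Open Scope ring_scope.

Definition hcomp (K : fieldType) (k : nat) (h : {mpoly K[2]}) : {mpoly K[2]} :=
  \sum_(m <- msupp h | mdeg m == k) h@_m *: 'X_[m].

Definition tdeg (K : fieldType) (h : {mpoly K[2]}) : nat := (msize h).-1.

Definition DF (K : fieldType) (F : {pred K}) (h : {mpoly K[2]}) : nat :=
  if h \is a mpolyOver 2 F then tdeg h
  else (tdeg h - \max_(k < msize h | hcomp k h \isn't a mpolyOver 2 F) k)%N.

Definition pcompq (K : fieldType) (p : {poly K}) (q : {mpoly K[2]}) : {mpoly K[2]} :=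
  (map_poly (@mpolyC 2 K) p).[q].

From HB Require Import structures.
From mathcomp Require Import all_boot all_order all_algebra.
From mathcomp.multinomials Require Import mpoly.
From mathcomp Require Import zify ring.

Set Implicit Arguments.
Unset Strict Implicit.
Unset Printing Implicit Defensive.

(* Let m = deg q, let r be the largest degree with q_r outside F[x,y] and
   n = deg p; then 1 <= r < m since q_m lies in F[x,y].  Split q = A + B, where
   A collects the components of degree > r (so A is in F[x,y]) and B has degree
   r.  In p(q) = a_n (A + B)^n + (lower powers of q) every component of degree
   above D = m (n - 1) + r comes from a_n A^n, while the component of degree D is
   that of a_n A^n plus n a_n q_m^(n-1) q_r.  As n a_n q_m^(n-1) is a nonzero
   element of F[x,y] (char 0) and F[x,y] is closed under exact division by its
   nonzero elements, this component is not in F[x,y].  Hence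
   D_F(p o q) = m n - D = m - r = D_F(q). *)

Import GRing.Theory.
Local Open Scope ring_scope.

Section MsizeBounds.
Variables (R : idomainType) (n : nat).
Implicit Types (g h : {mpoly R[n]}).

Lemma msize_leP d h :
  reflect (forall mo, (d <= mdeg mo)%N -> h@_mo = 0) (msize h <= d)%N.
Proof.
apply: (iffP idP) => [le_hd mo le_d_mo | h0].
  by apply/eqP; rewrite mcoeff_eq0 msize_mdeg_ge // (leq_trans le_hd).
have [->|nz_h] := eqVneq h 0; first by rewrite msize0.
rewrite -mlead_deg // ltnNge; apply: contraT; rewrite negbK => /h0.
by move/eqP; rewrite mleadc_eq0 (negPf nz_h).
Qed.

Lemma msize_mul_le g h : (msize (g * h) <= (msize g + msize h).-1)%N.
Proof.
have [->|nz_g] := eqVneq g 0; first by rewrite mul0r msize0.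
have [->|nz_h] := eqVneq h 0; first by rewrite mulr0 msize0.
by rewrite msizeM.
Qed.

Lemma msize_exp_le g s k : (msize g <= s.+1)%N -> (msize (g ^+ k) <= (s * k).+1)%N.
Proof.
move=> le_g; elim: k => [|k IHk]; first by rewrite expr0 msize1.
by rewrite exprS (leq_trans (msize_mul_le _ _)) //; have := leq_add le_g IHk; lia.
Qed.

Lemma msize_exp g k : g != 0 -> msize (g ^+ k) = ((msize g).-1 * k).+1.
Proof.
move=> nz_g; elim: k => [|k IHk]; first by rewrite expr0 msize1 muln0.
rewrite exprS msizeM ?expf_neq0 // IHk.
have : (0 < msize g)%N by rewrite lt0n msize_poly_eq0.
by lia.
Qed.

Lemma msizeDl g h : (msize h < msize g)%N -> msize (g + h) = msize g.
Proof.
move=> lt_hg; apply/anti_leq/andP; split.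
  by rewrite (leq_trans (msizeD_le _ _)) // geq_max leqnn ltnW.
have nz_g : g != 0 by rewrite -msize_poly_eq0 -lt0n (leq_ltn_trans _ lt_hg).
rewrite -mlead_deg //; apply: msize_mdeg_lt.
have /msize_leP h0 : (msize h <= mdeg (mlead g))%N by rewrite -ltnS mlead_deg.
by rewrite mcoeff_msupp mcoeffD h0 ?addr0 ?mleadc_eq0.
Qed.

Lemma msize_subX_le g1 g2 s k : (msize (g1 - g2) <= s)%N ->
  (msize g1 <= s.+1)%N -> (msize g2 <= s.+1)%N ->
  (msize (g1 ^+ k - g2 ^+ k) <= s * k)%N.
Proof.
move=> le12 le1 le2; elim: k => [|k IHk]; first by rewrite !expr0 subrr msize0.
have -> : g1 ^+ k.+1 - g2 ^+ k.+1 = g1 ^+ k * (g1 - g2) + (g1 ^+ k - g2 ^+ k) * g2.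
  by rewrite !exprS; ring.
rewrite (leq_trans (msizeD_le _ _)) // geq_max.
rewrite !(leq_trans (msize_mul_le _ _)) //; first by have := leq_add IHk le2; lia.
by have := leq_add (msize_exp_le k le1) le12; lia.
Qed.

Lemma msize_expM_sub_le g1 g2 h1 h2 s t k :
  (msize (g1 - g2) <= s)%N -> (msize g1 <= s.+1)%N -> (msize g2 <= s.+1)%N ->
  (msize (h1 - h2) <= t)%N -> (msize h2 <= t.+1)%N ->
  (msize (g1 ^+ k * h1 - g2 ^+ k * h2) <= s * k + t)%N.
Proof.
move=> le_g12 le_g1 le_g2 le_h12 le_h2.
have -> : g1 ^+ k * h1 - g2 ^+ k * h2 =
    g1 ^+ k * (h1 - h2) + (g1 ^+ k - g2 ^+ k) * h2.
  by move: (g1 ^+ k) (g2 ^+ k) => a b; ring.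
rewrite (leq_trans (msizeD_le _ _)) // geq_max; apply/andP; split.
  rewrite (leq_trans (msize_mul_le _ _)) //.
  by have := leq_add (msize_exp_le k le_g1) le_h12; lia.
rewrite (leq_trans (msize_mul_le _ _)) //.
by have := leq_add (msize_subX_le k le_g12 le_g1 le_g2) le_h2; lia.
Qed.

(* The terms g^(k+1-i) h^i, i >= 2, of the binomial expansion have degree at
   most m k + r - (i - 1)(m - r). *)
Lemma msize_expD_remainder g h m r k : (r < m)%N ->
  (msize g <= m.+1)%N -> (msize h <= r.+1)%N ->
  (msize ((g + h) ^+ k.+1 - g ^+ k.+1 - g ^+ k * h *+ k.+1) <= m * k + r)%N.
Proof.
move=> lt_rm le_g le_h; elim: k => [|k IHk].
  by rewrite !expr1 expr0 mul1r mulr1n addrAC addrK subrr msize0.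
have -> : (g + h) ^+ k.+2 - g ^+ k.+2 - g ^+ k.+1 * h *+ k.+2 =
    (g + h) * ((g + h) ^+ k.+1 - g ^+ k.+1 - g ^+ k * h *+ k.+1)
    + g ^+ k * h ^+ 2 *+ k.+1.
  by rewrite !exprS; move: ((g + h) ^+ k) (g ^+ k) => u a; ring.
have le_gh : (msize (g + h) <= m.+1)%N.
  by rewrite (leq_trans (msizeD_le _ _)) // geq_max le_g (leq_trans le_h) // ltnW.
rewrite (leq_trans (msizeD_le _ _)) // geq_max; apply/andP; split.
  by rewrite (leq_trans (msize_mul_le _ _)) //; have := leq_add le_gh IHk; lia.
rewrite -scaler_nat (leq_trans (msizeZ_le _ _)) //.
rewrite (leq_trans (msize_mul_le _ _)) //.
have := leq_add (msize_exp_le k le_g) (msize_exp_le 2 le_h); lia.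
Qed.

End MsizeBounds.

Section MpolyOverDiv.
Variables (K : fieldType) (S : divringClosed K) (n : nat).

(* Peel off leading terms: the leading coefficient of g is that of f * g
   divided by that of f. *)
Lemma mpolyOver_divl (f g : {mpoly K[n]}) : f \is a mpolyOver n S -> f != 0 ->
  f * g \is a mpolyOver n S -> g \is a mpolyOver n S.
Proof.
move=> S_f nz_f; have [s lt_gs] := ubnP (size (msupp g)).
elim: s g lt_gs => // s IHs g lt_gs S_fg.
have [->|nz_g] := eqVneq g 0; first exact: mpolyOver0.
have S_c : mleadc g \in S.
  have nz_lf : mleadc f != 0 by rewrite mleadc_eq0.
  rewrite -(mulKf nz_lf (mleadc g)) -mleadcM rpredM ?rpredV //.
    by move/mpolyOverP: S_f.
  by move/mpolyOverP: S_fg.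
rewrite -(subrK (mleadc g *: 'X_[mlead g]) g) rpredD ?mpolyOverZ ?mpolyOverX //.
apply: IHs.
  have : (0 < size (msupp g))%N by rewrite lt0n size_eq0 msupp_eq0.
  rewrite (perm_size (msupp_rem _ _)) size_rem ?mlead_supp //.
  by case: (size _) lt_gs.
by rewrite mulrBr rpredB // -scalerAr mpolyOverZ // rpredM // mpolyOverX.
Qed.

End MpolyOverDiv.

Section Restriction.
Variables (R : nzRingType) (n : nat).

Definition mrestrict (P : pred 'X_{1..n}) (h : {mpoly R[n]}) : {mpoly R[n]} :=
  \sum_(m <- msupp h | P m) h@_m *: 'X_[m].

Lemma mcoeff_mrestrict P h mo : (mrestrict P h)@_mo = if P mo then h@_mo else 0.
Proof.
rewrite /mrestrict raddf_sum /= big_mkcond /=.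
under eq_bigr do rewrite mcoeffZ mcoeffX.
case: ifP => [P_mo|nP_mo].
  rewrite [in RHS](mpolyE h) raddf_sum /=; apply: eq_bigr => m _.
  rewrite mcoeffZ mcoeffX.
  by case: (eqVneq m mo) => [->|_]; rewrite ?P_mo // mulr0 if_same.
rewrite big1 // => m _; case: ifP => // P_m; case: (eqVneq m mo) => [Em|_].
  by rewrite -Em P_m in nP_mo.
by rewrite mulr0.
Qed.

End Restriction.

Section HomogeneousComponent.
Variable K : fieldType.
Implicit Types (g h : {mpoly K[2]}).

Lemma hcompE k h : hcomp k h = pihomog mdeg k h.
Proof. by []. Qed.

Lemma mcoeff_hcomp k h mo :
  (hcomp k h)@_mo = if mdeg mo == k then h@_mo else 0.
Proof. exact: (mcoeff_mrestrict (fun m => mdeg m == k)). Qed.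

Lemma hcompD k : {morph @hcomp K k : g h / g + h}.
Proof. exact: pihomogD. Qed.

Lemma hcomp_homog k h : hcomp k h \is k.-homog.
Proof. exact: pihomogP. Qed.

Lemma hcomp_dhomog d k h : h \is d.-homog -> hcomp k h = if k == d then h else 0.
Proof.
move=> h_d; case: eqP => [->|/eqP ne_kd]; first exact: pihomog_dE.
by rewrite hcompE (pihomog_ne0 _ h_d) // eq_sym.
Qed.

Lemma hcomp_msize k h : (msize h <= k)%N -> hcomp k h = 0.
Proof.
move=> le_hk; apply/mpolyP => mo; rewrite mcoeff_hcomp mcoeff0.
by case: eqP => // Emo; apply/eqP; rewrite mcoeff_eq0 msize_mdeg_ge // Emo.
Qed.

Lemma hcomp_neq0_lt_msize k h : hcomp k h != 0 -> (k < msize h)%N.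
Proof. by rewrite ltnNge; apply: contra => /hcomp_msize ->. Qed.

Variable F : divringClosed K.

Lemma hcomp_mpolyOverP k h :
  reflect (forall mo, mdeg mo = k -> h@_mo \in F) (hcomp k h \is a mpolyOver 2 F).
Proof.
apply: (iffP (mpolyOverP _)) => F_h mo.
  by move=> Emo; have := F_h mo; rewrite mcoeff_hcomp Emo eqxx.
by rewrite mcoeff_hcomp; case: eqP => [/F_h|_]; rewrite ?rpred0.
Qed.

Lemma hcomp_mpolyOver k h : h \is a mpolyOver 2 F -> hcomp k h \is a mpolyOver 2 F.
Proof. by move/mpolyOverP => F_h; apply/hcomp_mpolyOverP. Qed.

Lemma hcomp_nonF_lt_msize k h :
  hcomp k h \isn't a mpolyOver 2 F -> (k < msize h)%N.
Proof.
move=> nF; apply: hcomp_neq0_lt_msize.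
by apply: contraNneq nF => ->; apply: mpolyOver0.
Qed.

End HomogeneousComponent.

Definition top_nonF_degree (K : fieldType) (F : {pred K}) (D : nat)
    (h : {mpoly K[2]}) :=
  hcomp D h \isn't a mpolyOver 2 F /\
  forall k, (D < k)%N -> hcomp k h \is a mpolyOver 2 F.

Section TopNonFDegree.
Variables (K : fieldType) (F : divringClosed K).
Implicit Types (h : {mpoly K[2]}).

Lemma top_nonF_degree_exists j h : hcomp j h \isn't a mpolyOver 2 F ->
  exists2 D, (j <= D)%N & top_nonF_degree F D h.
Proof.
pose P k := hcomp k h \isn't a mpolyOver 2 F; move=> P_j.
have ubP k : P k -> (k <= msize h)%N by move/hcomp_nonF_lt_msize/ltnW.
case: (ex_maxnP (ex_intro P j P_j) ubP) => D P_D maxD.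
exists D; first exact: maxD.
split=> // k lt_Dk; apply/negPn/negP => /maxD; by rewrite leqNgt lt_Dk.
Qed.

Lemma top_nonF_degree_notin D h :
  top_nonF_degree F D h -> h \isn't a mpolyOver 2 F.
Proof. by case=> nF_D _; apply: contra nF_D; apply: hcomp_mpolyOver. Qed.

Lemma DF_top_nonF_degree D h :
  top_nonF_degree F D h -> DF F h = (tdeg h - D)%N.
Proof.
move=> topD; rewrite /DF (negbTE (top_nonF_degree_notin topD)); congr (_ - _)%N.
case: topD => nF_D F_gt; have lt_D := hcomp_nonF_lt_msize nF_D.
apply/anti_leq/andP; split.
  by apply/bigmax_leqP => k nF_k; rewrite leqNgt; apply: contra nF_k => /F_gt ->.
exact: (@leq_bigmax_cond _ _ _ (Ordinal lt_D)).
Qed.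

Lemma top_nonF_degreeD D G M L :
  G \is a mpolyOver 2 F -> M \is D.-homog -> M \isn't a mpolyOver 2 F ->
  (msize L <= D)%N -> top_nonF_degree F D (G + M + L).
Proof.
move=> F_G M_D nF_M le_LD.
have hcompL k : (D <= k)%N -> hcomp k L = 0.
  by move=> le_Dk; apply: hcomp_msize; apply: leq_trans le_Dk.
split=> [|k lt_Dk]; rewrite !hcompD (hcomp_dhomog _ M_D).
  rewrite eqxx hcompL // addr0; apply: contra nF_M => F_GM.
  by rewrite -(addKr (hcomp D G) M) rpredD ?rpredN ?hcomp_mpolyOver.
by rewrite gtn_eqF // hcompL ?(ltnW lt_Dk) // !addr0 hcomp_mpolyOver.
Qed.

End TopNonFDegree.

Section Composition.
Variable K : fieldType.
Implicit Types (p : {poly K}) (q : {mpoly K[2]}).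

Lemma msize_le_tdeg q : (msize q <= (tdeg q).+1)%N.
Proof. exact: leqSpred. Qed.

Lemma pcompqE p q : pcompq p q = \sum_(i < size p) p`_i *: q ^+ i.
Proof.
rewrite /pcompq horner_coef size_map_poly; apply: eq_bigr => i _.
by rewrite coef_map mul_mpolyC.
Qed.

Lemma msize_pcompq_sub_lead p q s : size p = s.+2 ->
  (msize (pcompq p q - lead_coef p *: q ^+ s.+1) <= (tdeg q * s).+1)%N.
Proof.
move=> Ep; rewrite pcompqE Ep big_ord_recr /= lead_coefE Ep addrK.
apply: leq_trans (msize_sum _ _ _) _; apply/bigmax_leqP => i _.
rewrite (leq_trans (msizeZ_le _ _)) //.
rewrite (leq_trans (msize_exp_le i (msize_le_tdeg q))) //.
by rewrite ltnS leq_mul2l -ltnS ltn_ord orbT.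
Qed.

Lemma tdeg_pcompq p q :
  (0 < tdeg q)%N -> tdeg (pcompq p q) = (tdeg q * (size p).-1)%N.
Proof.
move=> tdeg_gt0; have nz_q : q != 0.
  by apply: contraTneq tdeg_gt0 => ->; rewrite /tdeg msize0.
case Ep: (size p) => [|[|s]] /=; rewrite ?muln0 /tdeg.
- by rewrite pcompqE Ep big_ord0 msize0.
- apply/eqP; rewrite -subn1 subn_eq0 pcompqE Ep big_ord1 expr0.
  by rewrite (leq_trans (msizeZ_le _ _)) // msize1.
rewrite -(subrK (lead_coef p *: q ^+ s.+1) (pcompq p q)) addrC msizeDl.
  by rewrite msizeZ ?lead_coef_eq0 -?size_poly_eq0 ?Ep // msize_exp.
rewrite msizeZ ?lead_coef_eq0 -?size_poly_eq0 ?Ep // msize_exp //.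
apply: leq_ltn_trans (msize_pcompq_sub_lead q Ep) _.
by rewrite ltnS -/(tdeg q) ltn_pmul2l.
Qed.

End Composition.

Definition upper_part (K : fieldType) (r : nat) (h : {mpoly K[2]}) :=
  mrestrict (fun m => (r < mdeg m)%N) h.

Section UpperPart.
Variables (K : fieldType) (q : {mpoly K[2]}) (r : nat).
Hypotheses (r_gt0 : (0 < r)%N) (lt_r_tdeg : (r < tdeg q)%N).

Local Notation m := (tdeg q).
Local Notation A := (upper_part r q).
Local Notation qm := (hcomp m q).
Local Notation qr := (hcomp r q).

Lemma upper_part_mpolyOver (F : divringClosed K) :
  (forall k, (r < k)%N -> hcomp k q \is a mpolyOver 2 F) -> A \is a mpolyOver 2 F.
Proof.
move=> F_gt; apply/mpolyOverP => mo; rewrite mcoeff_mrestrict.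
by case: ifP => [/F_gt /hcomp_mpolyOverP|_]; [apply | apply: rpred0].
Qed.

Let q_hi mo : (m < mdeg mo)%N -> q@_mo = 0.
Proof. by move=> lt_m_mo; apply/msize_leP: lt_m_mo; apply: msize_le_tdeg. Qed.

Let le_A : (msize A <= m.+1)%N.
Proof.
by apply/msize_leP => mo /q_hi; rewrite mcoeff_mrestrict => ->; rewrite if_same.
Qed.

Let le_qm : (msize qm <= m.+1)%N.
Proof.
by apply/msize_leP => mo /q_hi; rewrite mcoeff_hcomp => ->; rewrite if_same.
Qed.

Let le_A_qm : (msize (A - qm) <= m)%N.
Proof.
apply/msize_leP => mo; rewrite mcoeffB mcoeff_mrestrict mcoeff_hcomp leq_eqVlt.
case/predU1P => [<-|/q_hi ->]; last by rewrite !if_same subrr.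
by rewrite lt_r_tdeg eqxx subrr.
Qed.

Let le_B : (msize (q - A) <= r.+1)%N.
Proof.
by apply/msize_leP => mo lt_r_mo; rewrite mcoeffB mcoeff_mrestrict lt_r_mo subrr.
Qed.

Let le_qr : (msize qr <= r.+1)%N.
Proof. by apply/msize_leP => mo lt_r_mo; rewrite mcoeff_hcomp gtn_eqF. Qed.

Let le_B_qr : (msize (q - A - qr) <= r)%N.
Proof.
apply/msize_leP => mo; rewrite !mcoeffB mcoeff_mrestrict mcoeff_hcomp leq_eqVlt.
case/predU1P => [<-|lt_r_mo]; first by rewrite ltnn eqxx subr0 subrr.
by rewrite lt_r_mo gtn_eqF // subrr subr0.
Qed.

(* With B := q - A of degree r, a (A + B)^(n+1) agrees with
   a A^(n+1) + (n+1) a A^n B, and A^n B with qm^n qr, in all degrees >= m n + r. *)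
Lemma pcompq_upper_expansion (p : {poly K}) n : size p = n.+2 ->
  (msize (pcompq p q - lead_coef p *: A ^+ n.+1
          - (lead_coef p *+ n.+1) *: (qm ^+ n * qr)) <= m * n + r)%N.
Proof.
move=> Ep; set a := lead_coef p; set B := q - A.
have -> : pcompq p q - a *: A ^+ n.+1 - (a *+ n.+1) *: (qm ^+ n * qr) =
    (pcompq p q - a *: q ^+ n.+1)
    + a *: ((A + B) ^+ n.+1 - A ^+ n.+1 - A ^+ n * B *+ n.+1)
    + (a *+ n.+1) *: (A ^+ n * B - qm ^+ n * qr).
  rewrite /B [A + _]addrC subrK -!mul_mpolyC rmorphMn /=.
  move: (pcompq p q) (q ^+ n.+1) (A ^+ n.+1) (A ^+ n) (qm ^+ n).
  by move=> P Q An1 An Qm; ring.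
rewrite (leq_trans (msizeD_le _ _)) // geq_max; apply/andP; split.
  rewrite (leq_trans (msizeD_le _ _)) // geq_max; apply/andP; split.
    by rewrite (leq_trans (msize_pcompq_sub_lead q Ep)) // -addn1 leq_add2l.
  by rewrite (leq_trans (msizeZ_le _ _)) // msize_expD_remainder.
by rewrite (leq_trans (msizeZ_le _ _)) // msize_expM_sub_le.
Qed.

End UpperPart.

Theorem theorem24 (K : fieldType) (F : divringClosed K)
  (charK0 : [pchar K] =i pred0)
  (Fproper : exists x : K, x \notin F)
  (p : {poly K}) (q : {mpoly K[2]})
  (p_nonconst : (1 < size p)%N)
  (lc_in_F : lead_coef p \in F) (lc_neq0 : lead_coef p != 0)
  (q_notin : q \isn't a mpolyOver 2 F)
  (qm_neq0 : hcomp (tdeg q) q != 0)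
  (qm_in : hcomp (tdeg q) q \is a mpolyOver 2 F)
  (qj : exists j : nat, (1 <= j)%N /\ hcomp j q \isn't a mpolyOver 2 F) :
  pcompq p q \isn't a mpolyOver 2 F /\ DF F (pcompq p q) = DF F q.
Proof.
have [j [j_gt0 nF_j]] := qj.
have [r le_jr [nF_r F_gt_r]] := top_nonF_degree_exists nF_j.
have r_gt0 : (0 < r)%N := leq_trans j_gt0 le_jr.
set m := tdeg q.
have lt_rm : (r < m)%N.
  rewrite ltn_neqAle -ltnS.
  rewrite (leq_trans (hcomp_nonF_lt_msize nF_r)) ?msize_le_tdeg //.
  by rewrite andbT; apply: contraNneq nF_r => ->.
have [n Ep] : exists n, size p = n.+2.
  by exists (size p).-2; case: (size p) p_nonconst => [|[]].
set a := lead_coef p.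
have na_neq0 : a *+ n.+1 != 0 by rewrite -mulr_natr mulf_neq0 // (pcharf0P _).1.
set G := a *: upper_part r q ^+ n.+1.
set M := (a *+ n.+1) *: (hcomp m q ^+ n * hcomp r q).
have top_pq : top_nonF_degree F (m * n + r) (pcompq p q).
  have -> : pcompq p q = G + M + (pcompq p q - G - M).
    by rewrite -addrA [M + _]addrC subrK addrC subrK.
  apply: top_nonF_degreeD.
  - by rewrite /G -mul_mpolyC rpredM ?mpolyOverC ?rpredX ?upper_part_mpolyOver.
  - by rewrite /M dhomogZ // dhomogM ?dhomogMn ?hcomp_homog.
  - apply: contra nF_r => F_M.
    apply: (mpolyOver_divl (f := (a *+ n.+1) *: hcomp m q ^+ n)).
    + by rewrite -mul_mpolyC rpredM ?mpolyOverC ?rpredMn ?rpredX.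
    + by rewrite scaler_eq0 negb_or na_neq0 expf_neq0.
    + by rewrite -scalerAl.
  - exact: pcompq_upper_expansion.
split; first exact: top_nonF_degree_notin top_pq.
rewrite (DF_top_nonF_degree top_pq) (DF_top_nonF_degree (conj nF_r F_gt_r)).
by rewrite tdeg_pcompq ?Ep -/m ?mulnS; lia.
Qed.
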